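(* Let $\mathbf T$ be a countably infinite homogeneous tournament and $\mathbf T^*$ an expansion of $\mathbf T$ as in the context. If $\mathrm{Age}(\mathbf T^* )$ has the expansion property relative to $\mathrm{Age}(\mathbf T)$, then $\mathrm{Age}(I_\omega[\mathbf T]^* )$ has the expansion property relative to $\mathrm{Age}(I_\omega[\mathbf T])$, where $I_\omega[\mathbf T]$ is the reduct of $I_\omega[\mathbf T]^*$ to $\{E\}$.
   Context: The age $\mathrm{Age}(\mathbf F)$ of a structure $\mathbf F$ is the class of finite structures embeddable in $\mathbf F$. Expansion property: let $L\subseteq L^*$ be relational languages, $\mathcal K$ a class of finite $L$-structures and $\mathcal K^*$ a class of finite $L^*$-structures whose $L$-reducts lie in $\mathcal K$. $\mathcal K^*$ has the expansion property relative to $\mathcal K$ if for every $\mathbf A\in\mathcal K$ there is $\mathbf B\in\mathcal K$ such that for all $\mathbf A^*,\mathbf B^*\in\mathcal K^*$ whose $L$-reducts are $\mathbf A$ and $\mathbf B$ respectively, $\mathbf A^*$ embeds into $\mathbf B^*$. A tournament is a directed graph in which every pair of distinct vertices carries exactly one directed edge; it is homogeneous if every isomorphism between finite substructures extends to an automorphism. $\mathbf T=(T,E^{\mathbf T})$ is a countable homogeneous tournament, and $\mathbf T^*$ is an expansion of $\mathbf T$ to a countable relational language $L_{\mathbf T^*}\supseteq\{E,<\}$ in which $<$ is interpreted as a linear order $<^*$ on $T$. Fix a linear order $\prec$ on $\mathbb N$ with $(\mathbb N,\prec)\cong(\mathbb Q,<)$. The structure $I_\omega[\mathbf T]^*$ has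 universe $\mathbb N\times T$ and language $L_{\mathbf T^*}$, interpreted as: for each $m$-ary $R\in L_{\mathbf T^*}\setminus\{<\}$ (including $E$), $R((k_1,x_1),\dots,(k_m,x_m))$ iff $k_1=\dots=k_m$ and $R^{\mathbf T^*}(x_1,\dots,x_m)$; and $(i,x)<(j,y)$ iff $i\prec j$, or $i=j$ and $x<^*y$. *)

From HB Require Import structures.
From mathcomp Require Import all_boot all_order all_algebra.
Set Implicit Arguments. Unset Strict Implicit. Unset Printing Implicit Defensive.
Import Order.TTheory GRing.Theory Num.Theory.

(* An [S]-structure on a universe [U]
   interprets each symbol [s] as a predicate on lists of elements of [U];
   only lists of length [ar s] are meaningful (see [emb]). *)
Definition lstruct (S : Type) (U : Type) := S -> seq U -> Prop.

Definition estruct (U : Type) := U -> U -> Prop.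

Definition emb (S : Type) (ar : S -> nat) (U V : Type)
  (A : lstruct S U) (B : lstruct S V) (f : U -> V) : Prop :=
  injective f /\
  forall (s : S) (l : seq U), size l = ar s -> (A s l <-> B s (map f l)).

Definition embeds (S : Type) (ar : S -> nat) (U V : Type)
  (A : lstruct S U) (B : lstruct S V) : Prop := exists f, emb ar A B f.

Definition eemb (U V : Type) (A : estruct U) (B : estruct V) (f : U -> V) : Prop :=
  injective f /\ forall x y, A x y <-> B (f x) (f y).

Definition lclass (S : Type) := forall U : finType, lstruct S U -> Prop.
Definition eclass := forall U : finType, estruct U -> Prop.

Definition lage (S : Type) (ar : S -> nat) (W : Type) (F : lstruct S W) : lclass S :=
  fun U A => exists f : U -> W, emb ar A F f.
Definition eage (W : Type) (F : estruct W) : eclass :=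
  fun U A => exists f : U -> W, eemb A F f.

Definition ereduct (S : Type) (E : S) (U : Type) (A : lstruct S U) : estruct U :=
  fun x y => A E [:: x; y].

Definition expansion_property (S : Type) (ar : S -> nat) (E : S)
  (Kstar : lclass S) (K : eclass) : Prop :=
  forall (U : finType) (A : estruct U), K U A ->
  exists (V : finType) (B : estruct V), K V B /\
    forall (As : lstruct S U) (Bs : lstruct S V),
      Kstar U As -> Kstar V Bs ->
      (forall x y, ereduct E As x y <-> A x y) ->
      (forall x y, ereduct E Bs x y <-> B x y) ->
      embeds ar As Bs.

Definition tournament (T : Type) (E : estruct T) : Prop :=
  (forall x, ~ E x x) /\
  (forall x y, x <> y -> (E x y \/ E y x)) /\
  (forall x y, E x y -> ~ E y x).

Definition automorphism (T : Type) (E : estruct T) (g : T -> T) : Prop :=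
  bijective g /\ forall x y, E x y <-> E (g x) (g y).

(* Every isomorphism between finite substructures extends to an automorphism:
   a finite substructure is enumerated injectively by a : 'I_n -> T and the
   isomorphism sends a i to b i. *)
Definition homogeneous (T : Type) (E : estruct T) : Prop :=
  forall (n : nat) (a b : 'I_n -> T), injective a -> injective b ->
    (forall i j, E (a i) (a j) <-> E (b i) (b j)) ->
    exists g, automorphism E g /\ forall i, g (a i) = b i.

Definition countably_infinite (T : Type) : Prop :=
  exists f : nat -> T, bijective f.

Definition strict_linear_order (T : Type) (lt : T -> T -> Prop) : Prop :=
  (forall x, ~ lt x x) /\
  (forall x y z, lt x y -> lt y z -> lt x z) /\
  (forall x y, x <> y -> lt x y \/ lt y x).

Definition Iomega_star (S : eqType) (lt : S) (prec : nat -> nat -> Prop)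
  (T : Type) (RT : lstruct S T) : lstruct S (nat * T) :=
  fun s l =>
    if s == lt then
      match l with
      | [:: p; q] => prec p.1 q.1 \/ (p.1 = q.1 /\ RT lt [:: p.2; q.2])
      | _ => False
      end
    else exists k : nat, map fst l = nseq (size l) k /\ RT s (map snd l).

From HB Require Import structures.
From mathcomp Require Import all_boot all_order all_algebra.
From Stdlib Require Import Setoid.
Import Order.TTheory GRing.Theory Num.Theory.
Set Implicit Arguments. Unset Strict Implicit. Unset Printing Implicit Defensive.

(* The {E}-reduct of I_omega[T]^* is the disjoint union [copies ET] of
   countably many copies of T, and I_omega[T]^* itself is determined by two
   pieces of data: the order [prec] between blocks and, inside each block,
   the expansion T^*.  Given A in Age(I_omega[T]), pick a finite piece Y of T
   containing all T-coordinates of a copy of A, let B0 be the witness of the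
   expansion property of Age(T^* ) for Y, and take B := |A|+1 disjoint copies
   of B0.  For expansions A^* and B^* embedded in I_omega[T]^* :
   - every copy of B0 lies in one block, distinct copies in distinct blocks
     (tournaments are semicomplete), and so do the blocks of A;
   - the blocks of A are matched, order-preservingly, with copies of B0
     ([order_match]);
   - on each block of A, homogeneity of T moves Y onto that block, so the
     expansion property of Age(T^* ) embeds the block into its copy of B0;
   - gluing these block embeddings gives an embedding A^* -> B^*, because
     I_omega[T]^* only depends on the block order and on the blocks
     ([Iomega_transfer]). *)

(* [copies D]: disjoint union of copies of D indexed by I, with no edges
   between distinct copies.  I_omega[T] is [copies ET] with I = nat. *)
Definition copies (I V : Type) (D : estruct V) : estruct (I * V) :=
  fun p q => p.1 = q.1 /\ D p.2 q.2.

(* Any two distinct points are related one way or the other, as in a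
   tournament; this makes every copy in [copies D] connected. *)
Definition semicomplete (V : Type) (D : estruct V) : Prop :=
  forall v w, v <> w -> D v w \/ D w v.

Definition pullback (S V W : Type) (R : lstruct S W) (a : V -> W) : lstruct S V :=
  fun s l => R s (map a l).

Lemma pair_eq (A B : Type) (p q : A * B) : p.1 = q.1 -> p.2 = q.2 -> p = q.
Proof. by case: p q => ? ? [? ?] /= -> ->. Qed.

Lemma constant_map_eq (X Y Z : eqType) (f : X -> Y) (g : X -> Z) (L : seq X) :
  (forall x y, f x = f y <-> g x = g y) -> constant (map f L) = constant (map g L).
Proof.
move=> hfg; case: L => //= x L; rewrite !all_map; apply: eq_all => y /=.
by apply/eqP/eqP => /hfg.
Qed.

Lemma constant_map_head (X Y : eqType) (f : X -> Y) (x0 : X) (L : seq X) :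
  constant (map f (x0 :: L)) -> forall z, z \in x0 :: L -> f z = f x0.
Proof.
by rewrite /= all_map => /allP hall z; rewrite inE => /predU1P [-> | /hall /eqP].
Qed.

Lemma lt_mono_eq (d : Order.disp_t) (R : orderType d) (X : Type) (f g : X -> R) :
  (forall x y, (f x < f y)%O = (g x < g y)%O) -> forall x y, (f x == f y) = (g x == g y).
Proof. by move=> hfg x y; rewrite !eq_le !leNgt !hfg. Qed.

(* A finite family of points of a total order is matched order-preservingly
   into any injective family with at least as many indices: send the k-th
   smallest value of [a] to the index carrying the k-th smallest value of [c]. *)
Lemma order_match (d : Order.disp_t) (R : orderType d) (U : finType) (m : nat)
    (a : U -> R) (c : 'I_m.+1 -> R) :
  injective c -> #|U| <= m.+1 ->
  exists sigma : U -> 'I_m.+1, forall x y, (c (sigma x) < c (sigma y))%O = (a x < a y)%O.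
Proof.
move=> cinj cardU.
pose vals := sort <=%O (undup (map a (enum U))).
have vals_lt : sorted <%O vals by rewrite sort_lt_sorted undup_uniq.
have in_vals x : a x \in vals by rewrite mem_sort mem_undup map_f ?mem_enum.
have size_vals : size vals <= m.+1.
  by rewrite size_sort (leq_trans (size_undup _)) // size_map -cardT.
pose slots := sort (relpre c <=%O) (enum 'I_m.+1).
have keys_lt : sorted <%O (map c slots).
  by rewrite -sort_map sort_lt_sorted (map_inj_uniq cinj) enum_uniq.
have size_slots : size slots = m.+1 by rewrite size_sort size_enum_ord.
pose rank x := index (a x) vals.
have rank_lt x : rank x < m.+1 by rewrite (leq_trans _ size_vals) // index_mem.
exists (fun x => nth ord0 slots (rank x)) => x y.
rewrite -!(nth_map ord0 (c ord0)) ?size_slots //.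
rewrite (lt_sorted_ltn_nth (c ord0) keys_lt) ?inE ?size_map ?size_slots //.
by rewrite -(lt_sorted_ltn_nth (a x) vals_lt) ?inE ?index_mem // !nth_index.
Qed.

Lemma tournament_semicomplete (T : Type) (D : estruct T) :
  tournament D -> semicomplete D.
Proof. by move=> [_ []]. Qed.

Lemma eemb_semicomplete (V W : Type) (B : estruct V) (D : estruct W) (g : V -> W) :
  eemb B D g -> semicomplete D -> semicomplete B.
Proof.
move=> [ginj gE] Dsc v w /(contra_not (@ginj v w)) /Dsc.
by case=> /gE; [left | right].
Qed.

Lemma eemb_ext (U V : Type) (A : estruct U) (D D' : estruct V) (f : U -> V) :
  (forall p q, D p q <-> D' p q) -> eemb A D f -> eemb A D' f.
Proof. by move=> DD' [finj fE]; split => // x y; rewrite fE DD'. Qed.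

Lemma copies_same_block (I V : Type) (D : estruct V) (p q : I * V) :
  p.1 = q.1 -> copies D p q <-> D p.2 q.2.
Proof. by move=> pq; split => [[] | ]. Qed.

(* For an embedding into copies of a semicomplete D, two points land in the
   same copy iff they are equal or related: blocks are intrinsic to A. *)
Lemma copies_emb_block (X : eqType) (I V : Type) (A : estruct X) (D : estruct V)
    (f : X -> I * V) :
  semicomplete D -> eemb A (copies D) f ->
  forall x y, (f x).1 = (f y).1 <-> [\/ x = y, A x y | A y x].
Proof.
move=> Dsc [finj fE] x y; split => [same | [-> | /fE [] | /fE []] //].
case: (x =P y) => [-> | neq]; first exact: Or31.
have /Dsc [xy | yx] : (f x).2 <> (f y).2 by move/(pair_eq same)/finj.
- by apply: Or32; apply/fE.
- by apply: Or33; apply/fE.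
Qed.

Lemma copies_block (I : Type) (V : eqType) (D : estruct V) (p q : I * V) :
  semicomplete D -> [\/ p = q, copies D p q | copies D q p] <-> p.1 = q.1.
Proof.
move=> Dsc; split => [[-> | [] | []] // | same].
case: (p.2 =P q.2) => [/(pair_eq same) -> | /Dsc [pq | qp]]; first exact: Or31.
- exact: Or32.
- exact: Or33.
Qed.

Lemma copies_emb_same_block (I : eqType) (J : Type) (V : eqType) (W : Type)
    (D : estruct V) (D' : estruct W) (f : I * V -> J * W) :
  semicomplete D -> semicomplete D' -> eemb (copies D) (copies D') f ->
  forall p q, (f p).1 = (f q).1 <-> p.1 = q.1.
Proof.
by move=> Dsc D'sc femb p q; rewrite (copies_emb_block D'sc femb) copies_block.
Qed.

Lemma emb_blocks_agree (X : eqType) (I V : Type) (A : estruct X) (D : estruct V)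
    (f f' : X -> I * V) :
  semicomplete D -> eemb A (copies D) f -> eemb A (copies D) f' ->
  forall x y, (f x).1 = (f y).1 <-> (f' x).1 = (f' y).1.
Proof.
by move=> Dsc femb f'emb x y;
  rewrite (copies_emb_block Dsc femb) (copies_emb_block Dsc f'emb).
Qed.

Lemma copies_emb (I J V W : Type) (D : estruct V) (D' : estruct W)
    (c : I -> J) (g : V -> W) :
  injective c -> eemb D D' g ->
  eemb (copies D) (copies D') (fun p => (c p.1, g p.2)).
Proof.
move=> cinj [ginj gE]; split; first by move=> [i v] [j w] [/cinj -> /ginj ->].
by move=> [i v] [j w]; rewrite /copies /= -gE; split => [[-> h] | [/cinj -> h]].
Qed.

Lemma homogeneous_fin (T : Type) (D : estruct T) : homogeneous D ->
  forall (U : finType) (P : {pred U}) (a b : U -> T),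
  {in P &, injective a} -> {in P &, injective b} ->
  {in P &, forall x y, D (a x) (a y) <-> D (b x) (b y)} ->
  exists g, automorphism D g /\ {in P, forall x, g (a x) = b x}.
Proof.
move=> hom U P a b ainj binj abD.
have [||| g [gaut gab]] := hom #|P| (a \o enum_val) (b \o enum_val).
- by move=> i j /(ainj _ _ (enum_valP i) (enum_valP j)) /enum_val_inj.
- by move=> i j /(binj _ _ (enum_valP i) (enum_valP j)) /enum_val_inj.
- by move=> i j; apply: abD; apply: enum_valP.
by exists g; split => // x Px; have := gab (enum_rank_in Px x); rewrite /= enum_rankK_in.
Qed.

Lemma nat_cover (T : Type) (e : nat -> T) (einv : T -> nat) :
  cancel einv e -> forall (U : finType) (a : U -> T),
  exists K, exists idx : U -> 'I_K.+1, forall x, e (idx x) = a x.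
Proof.
move=> einvK U a; exists (\max_x einv (a x)), (fun x => inord (einv (a x))) => x.
by rewrite inordK ?einvK // ltnS; apply: leq_bigmax.
Qed.

Lemma emb_reduct (S : Type) (ar : S -> nat) (E : S) (U W : Type)
    (As : lstruct S U) (F : lstruct S W) (A : estruct U) (f : U -> W) :
  ar E = 2 -> emb ar As F f -> (forall x y, ereduct E As x y <-> A x y) ->
  eemb A (ereduct E F) f.
Proof.
move=> hEar [finj fE] hAr; split => // x y.
by rewrite -hAr; exact: (fE E [:: x; y] (esym hEar)).
Qed.

Section Pullbacks.
Variables (S : Type) (ar : S -> nat) (E : S).
Variables (T : Type) (ET : estruct T) (RT : lstruct S T).
Hypothesis hexpE : forall x y, RT E [:: x; y] <-> ET x y.

Lemma pullback_lage (U : finType) (a : U -> T) :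
  injective a -> lage ar RT (pullback RT a).
Proof. by move=> ainj; exists a; split. Qed.

Lemma pullbacks_embed (U V : finType) (A : estruct U) (B : estruct V)
    (a : U -> T) (b : V -> T) :
  (forall As Bs, lage ar RT As -> lage ar RT Bs ->
     (forall x y, ereduct E As x y <-> A x y) ->
     (forall x y, ereduct E Bs x y <-> B x y) -> embeds ar As Bs) ->
  injective a -> injective b ->
  (forall x y, A x y <-> ET (a x) (a y)) -> (forall x y, B x y <-> ET (b x) (b y)) ->
  exists psi : U -> V, injective psi /\
    forall s l, size l = ar s -> (RT s (map a l) <-> RT s (map b (map psi l))).
Proof.
move=> hP ainj binj aE bE.
have [psi [psiinj psiE]] : embeds ar (pullback RT a) (pullback RT b).
  apply: hP; try exact: pullback_lage.
  - by move=> x y; rewrite aE; apply: hexpE.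
  - by move=> x y; rewrite bE; apply: hexpE.
by exists psi.
Qed.
End Pullbacks.

Section Iomega.
Variables (S : eqType) (ar : S -> nat) (E lt : S) (prec : nat -> nat -> Prop).
Variables (T : Type) (RT : lstruct S T).
Let Iom := Iomega_star lt prec RT.

Lemma Iomega_reduct (ET : estruct T) :
  E != lt -> (forall x y, RT E [:: x; y] <-> ET x y) ->
  forall p q, ereduct E Iom p q <-> copies ET p q.
Proof.
move=> hEl hexpE [i x] [j y]; rewrite /ereduct /Iom /Iomega_star (negbTE hEl) /copies /=.
by split => [[k [[-> ->] /hexpE]] | [-> /hexpE h]] //; exists j.
Qed.

Lemma Iomega_other (s : S) (L : seq (nat * T)) :
  s != lt -> Iom s L <-> constant (map fst L) /\ RT s (map snd L).
Proof.
move=> sne; rewrite /Iom /Iomega_star (negbTE sne).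
split => [[k [hk h]] | [/(constantP 0) [k hk] h]].
  by rewrite hk constant_nseq.
by exists k; rewrite size_map in hk.
Qed.

Lemma Iomega_transfer (U : eqType) (F G : U -> nat * T) :
  ar lt = 2 ->
  (forall x y, (F x).1 = (F y).1 <-> (G x).1 = (G y).1) ->
  (forall x y, prec (F x).1 (F y).1 <-> prec (G x).1 (G y).1) ->
  (forall s L, size L = ar s -> constant (map (fst \o F) L) ->
     RT s (map (snd \o F) L) <-> RT s (map (snd \o G) L)) ->
  forall s L, size L = ar s -> Iom s (map F L) <-> Iom s (map G L).
Proof.
move=> hltar same order inside s L hs.
case: (s =P lt) => [sl | /eqP sne].
- subst s; rewrite hltar in hs; case: L hs => [|x [|y []]] // hs.
  have inside2 : (F x).1 = (F y).1 ->
      RT lt [:: (F x).2; (F y).2] <-> RT lt [:: (G x).2; (G y).2].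
    by move=> exy; apply: (inside lt [:: x; y]) => //=; rewrite exy eqxx.
  rewrite /Iom /Iomega_star eqxx /=.
  split => [[h | [exy h]] | [h | [exy h]]].
  + by left; apply/order.
  + by right; split; [apply/same | apply/(inside2 exy)].
  + by left; apply/order.
  + by have exy' := proj2 (same x y) exy; right; split => //; apply/(inside2 exy').
- rewrite !Iomega_other // -!map_comp (constant_map_eq L same).
  split => -[cG h]; split => //; apply/(inside s L hs) => //;
    by rewrite (constant_map_eq L same).
Qed.
End Iomega.

(* The core of the argument: A and the copy structure on n+1 copies of B0
   are fixed, and the expansions A^* = As and B^* = Bs are given by their
   embeddings fA, fB into I_omega[T]^*.  The points of Y = 'I_K.+1 are
   placed in T by [pt], and f0 puts A inside I_omega[T] using them. *)
Section Gluing.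
Variables (S : eqType) (ar : S -> nat) (E lt : S).
Hypotheses (hEl : E != lt) (hEar : ar E = 2) (hltar : ar lt = 2).
Variables (T : Type) (ET : estruct T) (RT : lstruct S T).
Hypotheses (hexpE : forall x y, RT E [:: x; y] <-> ET x y).
Hypotheses (ETsc : semicomplete ET) (hhom : homogeneous ET).
Variables (prec : nat -> nat -> Prop) (phi : nat -> rat).
Hypotheses (phiinj : injective phi) (hphi : forall i j, prec i j <-> (phi i < phi j)%R).
Let Iom := Iomega_star lt prec RT.

Variables (K : nat) (pt : 'I_K.+1 -> T) (V0 : finType) (B0 : estruct V0).
Hypotheses (ptinj : injective pt) (B0sc : semicomplete B0).
(* The expansion property of Age(T^* ) for Y, with witness B0. *)
Hypothesis hP : forall (As : lstruct S 'I_K.+1) (Bs : lstruct S V0),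
  lage ar RT As -> lage ar RT Bs ->
  (forall i j, ereduct E As i j <-> ET (pt i) (pt j)) ->
  (forall v w, ereduct E Bs v w <-> B0 v w) -> embeds ar As Bs.

Variables (U : finType) (A : estruct U) (f0 : U -> nat * T) (idx : U -> 'I_K.+1).
Variable m : nat.
Hypotheses (f0copies : eemb A (copies ET) f0) (f0idx : forall x, pt (idx x) = (f0 x).2).
Hypothesis cardU : #|U| <= m.+1.

Variables (As : lstruct S U) (Bs : lstruct S ('I_m.+1 * V0)).
Variables (fA : U -> nat * T) (fB : 'I_m.+1 * V0 -> nat * T).
Hypotheses (fAemb : emb ar As Iom fA) (fBemb : emb ar Bs Iom fB).
Hypothesis hAr : forall x y, ereduct E As x y <-> A x y.
Hypothesis hBr : forall p q, ereduct E Bs p q <-> copies B0 p q.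

Lemma fA_copies : eemb A (copies ET) fA.
Proof. apply: (eemb_ext _ (emb_reduct hEar fAemb hAr)); exact: Iomega_reduct. Qed.

Lemma fB_copies : eemb (copies B0) (copies ET) fB.
Proof. apply: (eemb_ext _ (emb_reduct hEar fBemb hBr)); exact: Iomega_reduct. Qed.

Lemma same_block x y : (fA x).1 = (fA y).1 <-> (f0 x).1 = (f0 y).1.
Proof. exact: (emb_blocks_agree ETsc fA_copies f0copies). Qed.

Lemma copy_block p q : (fB p).1 = (fB q).1 <-> p.1 = q.1.
Proof. exact: (copies_emb_same_block B0sc ETsc fB_copies). Qed.

Lemma block_automorphism (P : {pred U}) :
  {in P &, forall x y, (fA x).1 = (fA y).1} ->
  exists g, automorphism ET g /\ {in P, forall x, g (pt (idx x)) = (fA x).2}.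
Proof.
move=> Pblock; apply: (homogeneous_fin hhom) => x y Px Py.
- rewrite /= !f0idx => e2; apply: (fst f0copies); apply: pair_eq e2.
  exact/same_block/Pblock.
- by move=> e2; apply: (fst fA_copies); apply: pair_eq e2; apply: Pblock.
- rewrite !f0idx -(copies_same_block ET (Pblock _ _ Px Py)) -(snd fA_copies).
  by rewrite (snd f0copies) copies_same_block //; apply/same_block/Pblock.
Qed.

Lemma copy_embedding (j : 'I_m.+1) (g : T -> T) : automorphism ET g ->
  exists psi : 'I_K.+1 -> V0, injective psi /\ forall s l, size l = ar s ->
    (RT s (map (g \o pt) l) <-> RT s (map (fun v => (fB (j, v)).2) (map psi l))).
Proof.
move=> [/bij_inj ginj gE].
apply: (pullbacks_embed hexpE (A := fun i i' => ET (pt i) (pt i')) hP).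
- exact: inj_comp ginj ptinj.
- move=> v w e2; suff /(fst fB_copies) [] : fB (j, v) = fB (j, w) by [].
  by apply: pair_eq e2; apply/copy_block.
- by move=> i i'; apply: gE.
- move=> v w; rewrite -(copies_same_block B0 (p := (j, v)) (q := (j, w))) //.
  by rewrite (snd fB_copies) copies_same_block //; apply/copy_block.
Qed.

(* Copy j of B0 is sent into block [c j], with c injective.  (V0 is
   inhabited, being the target of an embedding of Y.) *)
Lemma copy_positions :
  exists c : 'I_m.+1 -> nat, injective c /\ forall j v, (fB (j, v)).1 = c j.
Proof.
have idaut : automorphism ET id by split => //; exists id.
have [psi0 _] := copy_embedding ord0 idaut.
exists (fun j => (fB (j, psi0 ord0)).1); split.
- by move=> i j /copy_block.
- by move=> j v; apply/copy_block.
Qed.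

Lemma block_ranking (c : 'I_m.+1 -> nat) : injective c ->
  exists sigma : U -> 'I_m.+1,
    (forall x y, sigma x = sigma y <-> (fA x).1 = (fA y).1) /\
    (forall x y, prec (c (sigma x)) (c (sigma y)) <-> prec (fA x).1 (fA y).1).
Proof.
move=> cinj.
have [sigma hsigma] := order_match (fun x => phi (fA x).1) (inj_comp phiinj cinj) cardU.
exists sigma; split => x y; last by rewrite !hphi hsigma.
have := lt_mono_eq hsigma x y; rewrite /= !(inj_eq phiinj) (inj_eq cinj) => e.
by split => [/eqP | /eqP]; [rewrite e | rewrite -e] => /eqP.
Qed.

Lemma gluing : embeds ar As Bs.
Proof.
have [c [cinj fBc]] := copy_positions.
have [sigma [sigma_block sigma_prec]] := block_ranking cinj.
have block_aut j : exists gj, automorphism ET gj /\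
    {in [pred x | sigma x == j], forall x, gj (pt (idx x)) = (fA x).2}.
  apply: block_automorphism => x y; rewrite !inE => /eqP hx /eqP hy.
  by apply/sigma_block; rewrite hx hy.
have [g hg] := fin_all_exists block_aut.
have [psi hpsi] := fin_all_exists (fun j => copy_embedding j (hg j).1).
pose h x := (sigma x, psi (sigma x) (idx x)).
exists h; split.
  move=> x y [exy]; rewrite /h -exy => /((hpsi _).1) /(congr1 pt).
  rewrite !f0idx => e2.
  by apply: (fst f0copies); apply: pair_eq e2; apply/same_block/sigma_block.
move=> s L hs; rewrite (snd fAemb s L hs) (snd fBemb s _ (etrans (size_map _ _) hs)).
rewrite -map_comp.
apply: (Iomega_transfer hltar) => //.
- by move=> x y; rewrite /= !fBc -sigma_block; split => [-> | /cinj].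
- by move=> x y; rewrite /= !fBc sigma_prec.
move=> s' [// | x0 l] hl hconst; set j := sigma x0.
have in_block z : z \in x0 :: l -> sigma z = j.
  by move/(constant_map_head hconst)/sigma_block.
have -> : map (snd \o fA) (x0 :: l) = map (g j \o pt) (map idx (x0 :: l)).
  by rewrite -map_comp; apply/eq_in_map => z /in_block zj /=; rewrite (hg j).2 // inE zj.
have -> : map (snd \o (fB \o h)) (x0 :: l) =
    map (fun v => (fB (j, v)).2) (map (psi j) (map idx (x0 :: l))).
  by rewrite -!map_comp; apply/eq_in_map => z /in_block zj /=; rewrite /h zj.
by apply: (hpsi j).2; rewrite size_map.
Qed.
End Gluing.

(* Cover the T-coordinates of A by Y, take n+1 copies of the witness B0 for
   Y, and conclude by [gluing].  The argument does not use that the symbol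
   lt is interpreted in T^* as a linear order. *)
Theorem mainTheorem10
  (S : countType) (ar : S -> nat) (E lt : S)
  (hEl : E != lt) (hEar : ar E = 2) (hltar : ar lt = 2)
  (T : Type) (ET : T -> T -> Prop) (RT : S -> seq T -> Prop)
  (hcount : countably_infinite T)
  (htour : tournament ET) (hhom : homogeneous ET)
  (hexpE : forall x y, RT E [:: x; y] <-> ET x y)
  (hlin : strict_linear_order (fun x y => RT lt [:: x; y]))
  (prec : nat -> nat -> Prop)
  (hprec : exists phi : nat -> rat, bijective phi /\
             forall i j, prec i j <-> (phi i < phi j)%R) :
  expansion_property ar E (lage ar RT) (eage ET) ->
  expansion_property ar E
    (lage ar (Iomega_star lt prec RT))
    (eage (ereduct E (Iomega_star lt prec RT))).
Proof.
move=> hEP U A [f0 f0emb].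
have ETsc := tournament_semicomplete htour.
have [phi [/bij_inj phiinj hphi]] := hprec.
have f0copies : eemb A (copies ET) f0.
  by apply: (eemb_ext _ f0emb); apply: Iomega_reduct.
have [e [einv eK einvK]] := hcount.
have [K [idx f0idx]] := nat_cover einvK (fun x => (f0 x).2).
pose pt (i : 'I_K.+1) := e i.
have ptinj : injective pt by move=> i j /(can_inj eK) /ord_inj.
have Yage : eage ET (fun i j => ET (pt i) (pt j)) by exists pt.
have [V0 [B0 [[g0 g0emb] hP]]] := hEP _ _ Yage.
exists ('I_#|U|.+1 * V0)%type, (copies B0); split.
  exists (fun p => (nat_of_ord p.1, g0 p.2)).
  apply: (eemb_ext _ (copies_emb (@ord_inj _) g0emb)) => p q.
  by symmetry; apply: Iomega_reduct.
move=> As Bs [fA fAemb] [fB fBemb] hAr hBr.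
exact: (gluing hEl hEar hltar hexpE ETsc hhom phiinj hphi ptinj
  (eemb_semicomplete g0emb ETsc) hP f0copies f0idx (leqnSn _) fAemb fBemb hAr hBr).
Qed.
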